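(* For $n\ge3$ the Hilbert series of $K^{\infty}_n$ is $$\mathcal{H}^{[n]}_K(t)=\sum_{k\ge0}c^{[n]}_kt^k=\frac{1}{t^n\,\mathcal{K}_n(1/t)}.$$
   Context: $K^{\infty}_n=\langle y_1,\dots,y_n\mid y_iy_j=y_jy_i\ (j+2\le i\le n-1),\ y_ny_k=y_ky_n\ (1\le k\le n-3)\rangle$, and $c^{[n]}_k$ is the number of its elements of length $k$. $\mathcal{K}_n(\lambda)=\det(\lambda I_n-M_n)$ where $M_n$ is the $n\times n$ matrix with $(M_n)_{j,i}=1$ if $i\ge j-1$ or $(j,i)=(n,n-2)$, and $0$ otherwise. *)

From HB Require Import structures.
From mathcomp Require Import all_boot all_order all_algebra all_fingroup.
Set Implicit Arguments. Unset Strict Implicit. Unset Printing Implicit Defensive.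
Import GRing.Theory.

(* Letters y_1..y_n are encoded as a : 'I_n with y_{a+1}.  The predicate
   [comm1 n i j] (1-based indices i j) encodes the defining relations
   y_i y_j = y_j y_i for j+2 <= i <= n-1 and y_n y_k = y_k y_n for 1<=k<=n-3. *)
Definition comm1 (n i j : nat) : bool :=
  ((j.+2 <= i) && (i <= n - 1) && (1 <= j))
  || ((i == n) && (1 <= j) && (j <= n - 3)).

Definition commb (n : nat) (a b : 'I_n) : bool :=
  comm1 n a.+1 b.+1 || comm1 n b.+1 a.+1.

Definition step (n k : nat) (u v : k.-tuple 'I_n) : bool :=
  [exists i : 'I_k, exists j : 'I_k,
     [&& (j == i.+1 :> nat), commb (tnth u i) (tnth u j)
       & [forall l : 'I_k, tnth v l == tnth u (tperm i j l)]]].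

(* the elements of length k of K^oo_n: congruence classes of words of length k *)
Definition Kclasses (n k : nat) : {set {set k.-tuple 'I_n}} :=
  [set [set v | connect (@step n k) u v] | u : k.-tuple 'I_n].

Definition c (n k : nat) : nat := #|Kclasses n k|.

Definition Mn (n : nat) : 'M[int]_n :=
  \matrix_(j < n, i < n)
    (if (j.+1 - 1 <= i.+1) || ((j.+1 == n) && (i.+1 == n - 2)) then 1%R else 0%R).

Definition Kpoly (n : nat) : {poly int} := char_poly (Mn n).

(* the polynomial t^n K_n(1/t) (reciprocal polynomial of degree n) *)
Definition Krev (n : nat) : {poly int} :=
  \poly_(i < n.+1) ((Kpoly n)`_(n - i))%R.

(* A class of K^oo_n has a unique lexicographically least representative word,
   and for this presentation a word is least exactly when every pair of
   consecutive letters y_j y_i has (M_n)_{j,i} = 1.  Hence c^{[n]}_k counts walks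
   in the digraph of M_n, and H(t) = 1 + t 1^T (1 - t M_n)^-1 1.  As M_n minus the
   all-ones matrix J is strictly lower triangular, det (1 - t M_n + t J) = 1, which
   the matrix determinant lemma rewrites as det (1 - t M_n) H(t) = 1; finally
   det (1 - t M_n) = t^n K_n(1/t). *)

From HB Require Import structures.
From mathcomp Require Import all_boot all_order all_algebra all_fingroup zify.
Set Implicit Arguments. Unset Strict Implicit. Unset Printing Implicit Defensive.
Import GRing.Theory.

Section LexNormalForm.

Variables (n : nat) (co edge : rel 'I_n).
Hypothesis coC : symmetric co.
Hypothesis co_irr : irreflexive co.
(* Together these two hypotheses make lexicographic minimality in a class a
   condition on consecutive letters: the least words are the [edge]-sorted ones. *)
Hypothesis edgeN : forall a b, ~~ edge a b -> (b < a) && co a b.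
Hypothesis edge_co : forall b x y : 'I_n, b < x -> co b x -> edge x y -> b < y.

Local Notation word := (seq 'I_n).

Fixpoint initial (b : 'I_n) (w : word) : bool :=
  if w is x :: s then (x == b) || co b x && initial b s else false.

Definition swap1 (u v : word) : Prop :=
  exists s1 x y s2, [/\ co x y, u = s1 ++ x :: y :: s2 & v = s1 ++ y :: x :: s2].

Inductive swaps : word -> word -> Prop :=
| swaps_refl u : swaps u u
| swaps_step u v w : swap1 u v -> swaps v w -> swaps u w.

Lemma swaps_trans u v w : swaps u v -> swaps v w -> swaps u w.
Proof. by elim=> // u1 v1 w1 uv _ IH /IH; apply: swaps_step. Qed.

Lemma swap1_cons a u v : swap1 u v -> swap1 (a :: u) (a :: v).
Proof. by case=> s1 [x [y [s2 [xy -> ->]]]]; exists (a :: s1), x, y, s2. Qed.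

Lemma swaps_cons a u v : swaps u v -> swaps (a :: u) (a :: v).
Proof.
elim=> [u1|u1 v1 w1 uv _ IH]; first exact: swaps_refl.
exact: swaps_step (swap1_cons a uv) IH.
Qed.

Lemma swap1_sym u v : swap1 u v -> swap1 v u.
Proof. by case=> s1 [x [y [s2 [xy -> ->]]]]; exists s1, y, x, s2; rewrite coC. Qed.

Lemma size_swap1 u v : swap1 u v -> size u = size v.
Proof. by case=> s1 [x [y [s2 [_ -> ->]]]]; rewrite !size_cat. Qed.

Lemma initial_mem b w : initial b w -> b \in w.
Proof.
elim: w => //= x s IH /orP [/eqP ->|/andP [_ /IH b_s]]; first exact: mem_head.
by rewrite in_cons b_s orbT.
Qed.

Lemma size_rem_initial b w : initial b w -> size (rem b w) = (size w).-1.
Proof. by move/initial_mem/size_rem. Qed.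

Lemma initial_swap1 b u v : swap1 u v -> initial b u = initial b v.
Proof.
case=> s1 [x [y [s2 [xy -> ->]]]]; elim: s1 => [|z s1 IH] /=; last by rewrite IH.
case: (eqVneq x b) => [xb|xb]; case: (eqVneq y b) => [yb|yb] /=.
- by rewrite xb yb co_irr in xy.
- by rewrite -xb xy.
- by rewrite -yb coC xy.
- by rewrite andbCA.
Qed.

Lemma rem_swap1 a u v : swap1 u v -> rem a u = rem a v \/ swap1 (rem a u) (rem a v).
Proof.
case=> s1 [x [y [s2 [xy -> ->]]]]; elim: s1 => [|z s1 IH] /=.
  case: (eqVneq x a) => [xa|xa]; case: (eqVneq y a) => [ya|ya] /=.
  - by rewrite xa ya co_irr in xy.
  - by left.
  - by left.
  - by right; exists [::], x, y, (rem a s2).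
case: ifP => _; first by right; exists s1, x, y, s2.
by case: IH => [->|/(swap1_cons z)]; [left | right].
Qed.

Lemma initial_swaps b w : initial b w -> swaps w (b :: rem b w).
Proof.
elim: w => //= x s IH /orP [/eqP ->|/andP [bx /IH s_b]].
  by rewrite eqxx; apply: swaps_refl.
have xb : x != b by apply: contraTneq bx => ->; rewrite co_irr.
rewrite (negbTE xb); apply: swaps_trans (swaps_cons x s_b) _.
by apply: swaps_step (swaps_refl _); exists [::], x, b, (rem b s); rewrite coC.
Qed.

Lemma initial_rem a b w : co b a -> initial b (rem a w) -> initial b w.
Proof.
move=> ba; elim: w => //= x s IH.
case: ifP => [/eqP -> b_s|_ /= /orP [->//|/andP [bx /IH ->]]]; last by rewrite bx orbT.
by rewrite ba b_s orbT.
Qed.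

Definition min_initial (w : word) : option 'I_n :=
  [pick a | initial a w && [forall b, initial b w ==> (a <= b)]].

Lemma min_initial_swap1 u v : swap1 u v -> min_initial u = min_initial v.
Proof.
move=> uv; apply: eq_pick => a /=; rewrite (initial_swap1 a uv); congr (_ && _).
by apply: eq_forallb => b; rewrite (initial_swap1 b uv).
Qed.

Lemma min_initialP x s : exists a, min_initial (x :: s) = Some a
  /\ initial a (x :: s) /\ forall b, initial b (x :: s) -> a <= b.
Proof.
have x_init : initial x (x :: s) by rewrite /= eqxx.
case: (@arg_minnP _ x (initial^~ (x :: s)) val x_init) => a a_init a_min.
rewrite /min_initial; case: pickP => [a' /andP [a'_init /forallP a'_min]|].
  by exists a'; do 2!split=> //; move=> b b_init; have := a'_min b; rewrite b_init.
move/(_ a); rewrite a_init /=; case/negP; apply/forallP => b; apply/implyP; exact: a_min.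
Qed.

Fixpoint lexnf_rec (fuel : nat) (w : word) : word :=
  if fuel is fuel'.+1 then
    if min_initial w is Some a then a :: lexnf_rec fuel' (rem a w) else w
  else w.

Definition lexnf (w : word) : word := lexnf_rec (size w) w.

Lemma lexnf_cons x s a : min_initial (x :: s) = Some a ->
  lexnf (x :: s) = a :: lexnf (rem a (x :: s)).
Proof.
move=> min_a; have : initial a (x :: s).
  by move: min_a; rewrite /min_initial; case: pickP => // a' /andP [? _] [<-].
by move=> a_init; rewrite /lexnf size_rem_initial //= min_a.
Qed.

Lemma lexnf_swap1 u v : swap1 u v -> lexnf u = lexnf v.
Proof.
move: {2}(size u) (leqnn (size u)) => k; elim: k u v => [|k IH] [|x s] v //=.
- by move=> _ [s1 [y [z [s2 [_ + _]]]]]; case: s1.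
- by move=> _ [s1 [y [z [s2 [_ + _]]]]]; case: s1.
move=> size_s uv; have [a [min_a [a_init _]]] := min_initialP x s.
case: v uv => [/size_swap1 //|y t] uv.
have min_a' : min_initial (y :: t) = Some a by rewrite -(min_initial_swap1 uv).
rewrite (lexnf_cons min_a) (lexnf_cons min_a'); congr (_ :: _).
have size_rem : size (rem a (x :: s)) <= k by rewrite size_rem_initial.
by case: (rem_swap1 a uv) => [->|/IH]; last apply.
Qed.

Lemma swaps_lexnf w : swaps w (lexnf w).
Proof.
move: {2}(size w) (leqnn (size w)) => k; elim: k w => [|k IH] [|x s] //=;
  try by move=> _; apply: swaps_refl.
move=> size_s; have [a [min_a [a_init _]]] := min_initialP x s.
rewrite (lexnf_cons min_a); apply: swaps_trans (initial_swaps a_init) _.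
by apply/swaps_cons/IH; rewrite size_rem_initial.
Qed.

Lemma sorted_lexnf w : sorted edge (lexnf w).
Proof.
move: {2}(size w) (leqnn (size w)) => k; elim: k w => [|k IH] [|x s] //= size_s.
have [a [min_a [a_init a_min]]] := min_initialP x s.
rewrite (lexnf_cons min_a); set w := rem a (x :: s).
have := IH w; rewrite size_rem_initial // => /(_ size_s).
case def_w : w => [|y t] //; have [b [min_b [b_init _]]] := min_initialP y t.
rewrite (lexnf_cons min_b) /= => ->; rewrite andbT.
apply/negPn/negP => /edgeN /andP [lt_ba co_ab].
have : initial b (x :: s) by apply: (@initial_rem a); rewrite 1?coC // -/w def_w.
by move/a_min; rewrite leqNgt lt_ba.
Qed.

Lemma not_initial_path (b x : 'I_n) s :
  path edge x s -> b < x -> co b x -> ~~ initial b s.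
Proof.
elim: s x => //= y s IH x /andP [xy path_s] lt_bx co_bx.
have lt_by := edge_co lt_bx co_bx xy.
apply/negP => /orP [/eqP yb|/andP [co_by]]; first by rewrite yb ltnn in lt_by.
exact/negP/(IH y path_s lt_by co_by).
Qed.

Lemma path_initial_min (a b : 'I_n) s : path edge a s -> initial b (a :: s) -> a <= b.
Proof.
move=> path_s /= /orP [/eqP -> //|/andP [co_ba b_s]].
rewrite leqNgt; apply/negP => lt_ba.
by have := not_initial_path path_s lt_ba co_ba; rewrite b_s.
Qed.

Lemma lexnf_sorted w : sorted edge w -> lexnf w = w.
Proof.
elim: w => // a s IH sorted_w.
have [a' [min_a' [a'_init a'_min]]] := min_initialP a s.
have a'a : a' = a.
  apply/val_inj/eqP; rewrite eqn_leq a'_min /= ?eqxx //.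
  exact: path_initial_min sorted_w a'_init.
rewrite a'a in min_a'; rewrite (lexnf_cons min_a') /= eqxx IH //.
by case: s sorted_w {IH min_a' a'_init a'_min} => //= x s /andP [].
Qed.

End LexNormalForm.

Definition edge n (a b : 'I_n) : bool := (a <= b.+1) || (a.+1 == n) && (b.+1 == n - 2).

Lemma commbC n : symmetric (@commb n).
Proof. by move=> a b; rewrite /commb orbC. Qed.

Lemma commbxx n : irreflexive (@commb n).
Proof. by move=> a; rewrite /commb /comm1; lia. Qed.

Lemma edgeN_commb n (a b : 'I_n) : ~~ edge a b -> (b < a) && commb a b.
Proof. by rewrite /edge /commb /comm1; have := ltn_ord a; have := ltn_ord b; lia. Qed.

Lemma edge_commb n (b x y : 'I_n) : b < x -> commb b x -> edge x y -> b < y.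
Proof.
by rewrite /edge /commb /comm1; have := ltn_ord x; have := ltn_ord y; have := ltn_ord b; lia.
Qed.

Lemma nth_swap (T : Type) (d : T) s1 x y s2 l :
  nth d (s1 ++ y :: x :: s2) l = nth d (s1 ++ x :: y :: s2)
    (if l == size s1 then (size s1).+1 else if l == (size s1).+1 then size s1 else l).
Proof.
rewrite !nth_cat; case: (ltngtP l (size s1)) => [lt_l|lt_l|->].
- by rewrite (ltn_eqF (leqW lt_l)) lt_l.
- case: eqP => [->|neq_l]; first by rewrite ltnn subSn // subnn.
  have -> : l - size s1 = (l - size s1 - 2).+2 by lia.
  by rewrite ltnNge (ltnW lt_l).
- by rewrite ltnNge leqnSn /= subnn subSn // subnn.
Qed.

Lemma take_drop2 (T : Type) (x0 : T) s i : i.+1 < size s ->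
  s = take i s ++ nth x0 s i :: nth x0 s i.+1 :: drop i.+2 s.
Proof.
by move=> lt_is; rewrite -{1}(cat_take_drop i s) (drop_nth x0 (ltnW lt_is)) (drop_nth x0 lt_is).
Qed.

Lemma step_swap1 n k (u v : k.-tuple 'I_n) : step u v <-> swap1 (@commb n) u v.
Proof.
split.
  case/existsP => i /existsP [j /and3P [/eqP j_def co_ij /forallP v_def]].
  have lt_ik : i.+1 < k by rewrite -j_def ltn_ord.
  set x := tnth u i; set y := tnth u j.
  have u_def : val u = take i u ++ x :: y :: drop i.+2 u.
    have lt_iu : i.+1 < size u by rewrite size_tuple.
    by rewrite [LHS](take_drop2 x lt_iu) /x /y -j_def -!tnth_nth.
  have size_take : size (take i u) = i by rewrite size_take size_tuple ltn_ord.
  exists (take i u), x, y, (drop i.+2 u); split=> //.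
  apply: (@eq_from_nth _ x).
    by rewrite size_tuple size_cat /= size_take size_drop size_tuple; lia.
  move=> l; rewrite size_tuple => lt_lk; rewrite nth_swap -u_def size_take.
  have := v_def (Ordinal lt_lk); rewrite !(tnth_nth x) => /eqP ->.
  case: tpermP => [/(congr1 val) /= ->|/(congr1 val) /= ->|li lj].
  - by rewrite eqxx j_def.
  - by rewrite j_def (gtn_eqF (ltnSn i)) eqxx.
  rewrite ifF ?ifF // -?j_def; apply/eqP => /= l_def.
  - by apply: lj; apply: val_inj.
  - by apply: li; apply: val_inj.
case=> s1 [x [y [s2 [co_xy u_def v_def]]]].
have lt_k : (size s1).+1 < k by rewrite -(size_tuple u) u_def size_cat /=; lia.
pose i := Ordinal (ltnW lt_k); pose j := Ordinal lt_k.
apply/existsP; exists i; apply/existsP; exists j; apply/and3P; split=> //.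
  by rewrite !(tnth_nth x) u_def /= !nth_cat ltnn subnn ltnNge leqnSn /= subSnn.
apply/forallP => l; rewrite !(tnth_nth x) v_def nth_swap -u_def.
case: tpermP => [->|->|li lj] /=; rewrite ?eqxx //.
  by rewrite (gtn_eqF (ltnSn _)).
rewrite ifF ?ifF //; apply/eqP => l_def.
- by apply: lj; apply: val_inj.
- by apply: li; apply: val_inj.
Qed.

Lemma step_sym n k : symmetric (@step n k).
Proof.
by move=> u v; apply/idP/idP => /step_swap1 /(swap1_sym (@commbC n)) /step_swap1.
Qed.

Lemma swaps_connect n k (s t : seq 'I_n) : swaps (@commb n) s t ->
  forall u : k.-tuple 'I_n, val u = s ->
  exists2 v : k.-tuple 'I_n, val v = t & connect (@step n k) u v.
Proof.
elim=> [s1|s1 s2 s3 s12 _ IH] u u_def; first by exists u.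
have size_s2 : size s2 == k by rewrite -(size_swap1 s12) -u_def size_tuple.
have [v v_def s2v] := IH (Tuple size_s2) erefl.
exists v => //; apply: connect_trans s2v; apply: connect1.
by apply/step_swap1; rewrite u_def.
Qed.

Lemma connect_lexnf n k (u v : k.-tuple 'I_n) :
  connect (@step n k) u v -> lexnf (@commb n) u = lexnf (@commb n) v.
Proof.
case/connectP => p; elim: p u => [|w p IH] u /=; first by move=> _ ->.
case/andP => /step_swap1 uw path_p v_def.
by rewrite (lexnf_swap1 (@commbC n) (@commbxx n) uw); apply: IH.
Qed.

Lemma card_Kclasses n k : c n k = #|[set w : k.-tuple 'I_n | sorted (@edge n) w]|.
Proof.
have sym_connect := sym_connect_sym (@step_sym n k).
rewrite /c; pose cls (u : k.-tuple 'I_n) := [set v | connect (@step n k) u v].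
have -> : Kclasses n k = cls @: [set w : k.-tuple 'I_n | sorted (@edge n) w].
  apply/setP => C; apply/imsetP/imsetP => [[u _ ->]|[g _ ->]]; last by exists g.
  have [g g_def ug] := swaps_connect (swaps_lexnf (@commbC n) (@commbxx n) u) erefl.
  exists g; first by rewrite inE g_def (sorted_lexnf (@commbC n) (@edgeN_commb n)).
  by apply/setP => w; rewrite !inE (same_connect sym_connect ug).
rewrite card_in_imset // => g1 g2; rewrite !inE => sorted_g1 sorted_g2 g12.
have : g2 \in cls g1 by rewrite g12 inE connect0.
rewrite inE => /connect_lexnf; rewrite !(lexnf_sorted (@edge_commb n)) //.
exact: val_inj.
Qed.

Local Open Scope ring_scope.

Definition mxsum (V : nmodType) m n (A : 'M[V]_(m, n)) : V := \sum_i \sum_j A i j.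

Fact mxsum_is_nmod_morphism (V : nmodType) m n : nmod_morphism (@mxsum V m n).
Proof.
split=> [|A B]; first by apply: big1 => i _; apply: big1 => j _; rewrite mxE.
rewrite -big_split; apply: eq_bigr => i _.
by rewrite -big_split; apply: eq_bigr => j _; rewrite mxE.
Qed.

HB.instance Definition _ (V : nmodType) m n :=
  GRing.isNmodMorphism.Build 'M[V]_(m, n) V (@mxsum V m n)
    (mxsum_is_nmod_morphism V m n).

Lemma mxsumZ (R : pzSemiRingType) m n a (A : 'M[R]_(m, n)) :
  mxsum (a *: A) = a * mxsum A.
Proof.
rewrite /mxsum mulr_sumr; apply: eq_bigr => i _; rewrite mulr_sumr.
by apply: eq_bigr => j _; rewrite mxE.
Qed.

Lemma map_mxsum (U V : nmodType) (f : {additive U -> V}) m n (A : 'M[U]_(m, n)) :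
  mxsum (map_mx f A) = f (mxsum A).
Proof.
rewrite /mxsum raddf_sum; apply: eq_bigr => i _; rewrite raddf_sum.
by apply: eq_bigr => j _; rewrite mxE.
Qed.

Lemma ones_mulmx_ones (R : pzSemiRingType) m n (A : 'M[R]_(m, n)) :
  ((const_mx 1 : 'rV_m) *m A *m (const_mx 1 : 'cV_n)) 0 0 = mxsum A.
Proof.
rewrite mxE /mxsum exchange_big; apply: eq_bigr => j _; rewrite !mxE mulr1.
by apply: eq_bigr => i _; rewrite mxE mul1r.
Qed.

(* For a 0/1 matrix [M], the number of walks through [k] vertices of its digraph
   (the empty walk counting once). *)
Definition walk_count (R : pzSemiRingType) n (M : 'M[R]_n) (k : nat) : R :=
  if k is l.+1 then mxsum (M ^+ l) else 1.

Lemma sum_tuple_cons (V : nmodType) (T : finType) k (F : k.+1.-tuple T -> V) :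
  \sum_t F t = \sum_b \sum_(t : k.-tuple T) F [tuple of b :: t].
Proof.
rewrite pair_bigA /= (reindex (fun p : T * k.-tuple T => [tuple of p.1 :: p.2])) //=.
exists (fun t : k.+1.-tuple T => (thead t, behead_tuple t)) => [[b t]|t] _.
  by congr (_, _); apply: val_inj.
by rewrite [RHS]tuple_eta; apply: val_inj.
Qed.

Lemma natr_card_set (R : pzSemiRingType) (T : finType) (P : pred T) :
  (#|[set x | P x]|)%:R = \sum_x (P x)%:R :> R.
Proof.
by rewrite -sum1dep_card natr_sum big_mkcond; apply: eq_bigr => x _; case: (P x).
Qed.

Section WordCount.
Variables (R : pzSemiRingType) (n : nat) (e : rel 'I_n).
Local Notation A := (\matrix_(a, b) (e a b)%:R : 'M[R]_n).

Lemma card_path_tuple a k :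
  (#|[set t : k.-tuple 'I_n | path e a t]|)%:R
  = (A ^+ k *m (const_mx 1 : 'cV_n)) a 0 :> R.
Proof.
elim: k a => [|k IHk] a.
  rewrite natr_card_set expr0 mul1mx mxE (eq_bigr (fun _ => 1)) => [|t _].
    by rewrite sumr_const card_tuple.
  by rewrite tuple0.
rewrite natr_card_set sum_tuple_cons exprS -mulmxE -mulmxA mxE.
apply: eq_bigr => b _; rewrite mxE -IHk natr_card_set mulr_sumr.
by apply: eq_bigr => t _ /=; case: (e a b); rewrite ?mul1r ?mul0r.
Qed.

Lemma card_sorted_tuple k :
  (#|[set t : k.-tuple 'I_n | sorted e t]|)%:R = walk_count A k :> R.
Proof.
case: k => [|k] /=.
  rewrite natr_card_set (eq_bigr (fun _ => 1)) => [|t _]; last by rewrite tuple0.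
  by rewrite sumr_const card_tuple.
rewrite natr_card_set sum_tuple_cons -ones_mulmx_ones -mulmxA mxE.
by apply: eq_bigr => a _; rewrite mxE mul1r -card_path_tuple natr_card_set.
Qed.
End WordCount.

Lemma det_add_mulmx (R : idomainType) n (A : 'M[R]_n) (u : 'cV_n) (v : 'rV_n) :
  \det A != 0 -> \det (A + u *m v) = \det A + (v *m \adj A *m u) 0 0.
Proof.
(* Compare det (X G) with det X * det G, then cancel the nonzero det A ^ n.+1. *)
move=> detA_neq0; pose X := block_mx A u (- v) (1 : 'M_1).
have detX : \det X = \det (A + u *m v).
  have -> : X = block_mx (A + u *m v) u 0 1 *m block_mx 1 0 (- v) (1 : 'M_1).
    by rewrite mulmx_block !mulmx1 !mulmx0 ?mul0mx ?mul1mx ?mulmxN ?addr0 ?add0r addrK.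
  by rewrite det_mulmx det_ublock det_lblock !det1 !mulr1.
pose G := block_mx (\adj A) (- (\adj A *m u)) 0 ((\det A)%:M : 'M_1).
have detG : \det A * \det G = \det A ^+ n.+1.
  by rewrite det_ublock det_scalar1 mulrA -det_mulmx mul_mx_adj det_scalar exprSr.
have XG : X *m G = block_mx (\det A)%:M 0 (- (v *m \adj A))
                           (v *m \adj A *m u + (\det A)%:M).
  rewrite mulmx_block mul_mx_adj !mulmx0 !addr0 mul1mx !mulmxN !mulNmx opprK mulmxA.
  by rewrite mul_mx_adj mul_scalar_mx mul_mx_scalar addNr mulmxA.
have := congr1 determinant XG; rewrite det_mulmx det_lblock det_scalar detX.
rewrite [v *m _ *m u]mx11_scalar -raddfD det_scalar1.
move=> /(congr1 (fun x => \det A * x)); rewrite mulrCA detG mulrA -exprS mulrC.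
move=> /mulfI -> ; last exact: expf_neq0.
by rewrite -mx11_scalar addrC.
Qed.

Lemma rregXn (R : nzRingType) k : GRing.rreg ('X^k : {poly R}).
Proof. by apply/rregX/rreg_lead; rewrite lead_coefX; apply: rreg1. Qed.

Lemma coef_comp_polyCX (R : comNzRingType) (p : {poly R}) a i :
  (p \Po (a%:P * 'X))`_i = p`_i * a ^+ i.
Proof.
rewrite comp_polyE (eq_bigr (fun j : 'I_(size p) => (p`_j * a ^+ j) *: 'X^j)).
  rewrite -(poly_def _ (fun j => p`_j * a ^+ j)) coef_poly; case: ltnP => // hi.
  by rewrite nth_default ?mul0r.
by move=> j _; rewrite exprMn -rmorphXn -!mul_polyC polyCM mulrA.
Qed.

Lemma char_poly_scaleX (R : comNzRingType) n (A : 'M[R]_n) :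
  char_poly ('X *: map_mx polyC A)
  = \poly_(i < n.+1) ('X^(n - i) * ((char_poly A)`_i)%:P).
Proof.
set F := char_poly _; set c := 'X : {poly R}.
(* Substituting X Y for Y in det (Y - X A) gives det (X (Y - A)) = X^n char_poly A. *)
have FcX : F \Po (c%:P * 'X) = c%:P ^+ n * map_poly polyC (char_poly A).
  rewrite map_char_poly /F /char_poly -det_map_mx -det_scalar -det_mulmx.
  congr (\det _); apply/matrixP => i j; rewrite mul_scalar_mx !mxE /= rmorphB rmorphMn /=.
  by rewrite comp_polyX comp_polyC polyCM mulrBr mulrnAr.
have coefF i : F`_i * c ^+ i = c ^+ n * ((char_poly A)`_i)%:P.
  have := congr1 (fun p : {poly {poly R}} => p`_i) FcX.
  by rewrite coef_comp_polyCX -rmorphXn coefCM coef_map.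
apply/polyP => i; apply: (@rregXn _ i); rewrite coefF coef_poly.
case: ltnP => [le_i_n | lt_n_i].
  by rewrite mulrAC -exprD subnK // -ltnS.
by rewrite nth_default ?size_char_poly // mulr0 mul0r.
Qed.

Lemma det_one_subXmx (R : comNzRingType) n (A : 'M[R]_n) :
  \det (1 - 'X *: map_mx polyC A) = \poly_(i < n.+1) (char_poly A)`_(n - i).
Proof.
have -> : 1 - 'X *: map_mx polyC A
          = map_mx (horner_eval 1) (char_poly_mx ('X *: map_mx polyC A)).
  by apply/matrixP => i j; rewrite !mxE rmorphB rmorphMn /= !horner_evalE hornerX hornerC.
rewrite (det_map_mx (horner_eval 1)) /= -/(char_poly _) char_poly_scaleX.
rewrite horner_evalE horner_poly poly_def.
rewrite (reindex_inj rev_ord_inj); apply: eq_bigr => i _ /=.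
rewrite expr1n mulr1 subSS subKn; first by rewrite mulrC mul_polyC.
by rewrite -ltnS.
Qed.

Lemma det_one_sub_strict_upper (R : comNzRingType) n (N : 'M[R]_n) :
  (forall i j : 'I_n, (i <= j)%N -> N i j = 0) -> \det (1 - N) = 1.
Proof.
move=> N_up; rewrite det_trig; last first.
  apply/is_trig_mxP => i j lt_ij.
  by rewrite !mxE N_up ?(ltnW lt_ij) // -val_eqE /= (ltn_eqF lt_ij) subr0.
by apply: big1 => i _; rewrite !mxE N_up // eqxx subr0.
Qed.

Section WalkSeries.
Variables (R : idomainType) (n : nat) (M : 'M[R]_n).
Hypothesis M_upper : forall i j : 'I_n, (i <= j)%N -> M i j = 1.

Local Notation Mx := (map_mx polyC M).
Local Notation D := (\det (1 - 'X *: Mx)).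

Lemma det_one_subXmx_neq0 : D != 0.
Proof.
apply/eqP => /(congr1 (horner_eval 0)); rewrite -det_map_mx rmorph0.
have -> : map_mx (horner_eval 0) (1 - 'X *: Mx) = 1%:M.
  apply/matrixP => i j; rewrite !mxE /= !horner_evalE !hornerE.
  by rewrite hornerMn hornerC subr0.
by rewrite det1 => /eqP; rewrite oner_eq0.
Qed.

Lemma det_add_X_mxsum_adj : D + 'X * mxsum (\adj (1 - 'X *: Mx)) = 1.
Proof.
have := det_add_mulmx ('X *: const_mx 1) (const_mx 1) det_one_subXmx_neq0.
rewrite -scalemxAr mxE ones_mulmx_ones => <-.
have -> : 1 - 'X *: Mx + ('X *: (const_mx 1 : 'cV_n)) *m (const_mx 1 : 'rV_n)
          = 1 - 'X *: map_mx polyC (M - const_mx 1).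
  apply/matrixP => i j; rewrite !mxE big_ord1 !mxE rmorphB /= !mulr1 mulrBr.
  by rewrite polyC1 mulr1 opprB addrA addrAC.
rewrite det_one_sub_strict_upper // => i j le_ij.
by rewrite !mxE M_upper // subrr rmorph0 mulr0.
Qed.

Lemma expr_scaleX l : ('X *: Mx) ^+ l = 'X^l *: map_mx polyC (M ^+ l).
Proof.
elim: l => [|l IHl]; first by rewrite !expr0 scale1r map_mx1.
rewrite exprS IHl -mulmxE -scalemxAr -scalemxAl scalerA -exprSr.
by rewrite -map_mxM mulmxE -exprS.
Qed.

Lemma det_mul_walk_series k :
  exists E : {poly R}, D * \poly_(i < k.+1) walk_count M i = 1 - 'X^(k.+1) * E.
Proof.
(* adj (1 - T) = D (1 + T + ... + T^(k-1)) + adj (1 - T) T^k, and T^k = X^k M^k. *)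
set A := 1 - 'X *: Mx; set T := 'X *: Mx; pose G := \sum_(l < k) T ^+ l.
have adjG : \adj A *m (1 - T ^+ k) = D *: G.
  have -> : 1 - T ^+ k = A *m G by rewrite mulmxE -opprB subrX1 -mulNr opprB.
  by rewrite mulmxA mul_adj_mx mul_scalar_mx.
have mxsumG : mxsum G = \sum_(l < k) (walk_count M l.+1)%:P * 'X^l.
  rewrite raddf_sum; apply: eq_bigr => l _.
  by rewrite /= expr_scaleX mxsumZ map_mxsum mulrC.
have walk_poly : \poly_(i < k.+1) walk_count M i = 1 + 'X * mxsum G.
  rewrite mxsumG poly_def big_ord_recl expr0 scale1r mulr_sumr; congr (_ + _).
  by apply: eq_bigr => l _; rewrite lift0 mulrCA -exprS mul_polyC.
exists (mxsum (\adj A *m map_mx polyC (M ^+ k))).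
rewrite walk_poly mulrDr mulr1 mulrCA -mxsumZ -adjG mulmxBr mulmx1 raddfB /=.
by rewrite expr_scaleX -scalemxAr mxsumZ mulrBr addrA det_add_X_mxsum_adj mulrA -exprS.
Qed.

Lemma det_walk_series_coef k :
  \sum_(i < k.+1) D`_i * walk_count M (k - i) = (k == 0)%:R.
Proof.
have [E DW] := det_mul_walk_series k.
have := congr1 (fun p : {poly R} => p`_k) DW.
rewrite coefM coefB coef1 coefXnM ltnSn subr0 => <-.
by apply: eq_bigr => i _; rewrite coef_poly ltnS leq_subr.
Qed.

End WalkSeries.

Lemma Mn_edge n : Mn n = \matrix_(a, b) (edge a b)%:R.
Proof. by apply/matrixP => a b; rewrite !mxE /edge subSS subn0; case: ifP. Qed.

Theorem proposition3 (n : nat) : (3 <= n)%N ->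
  forall k : nat,
    \sum_(i < k.+1) ((c n (k - i))%:Z * (Krev n)`_i) = ((k == 0)%N)%:R.
Proof.
move=> _ k.
have Mn_upper (a b : 'I_n) : (a <= b)%N -> Mn n a b = 1.
  by move=> le_ab; rewrite Mn_edge mxE /edge (leqW le_ab).
have -> : Krev n = \det (1 - 'X *: map_mx polyC (Mn n)) by rewrite det_one_subXmx.
rewrite -(det_walk_series_coef Mn_upper k); apply: eq_bigr => i _.
by rewrite mulrC card_Kclasses -natz Mn_edge card_sorted_tuple.
Qed.
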